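(* Let $\Gamma$ be a metrized graph that is a tree with $v$ vertices. Then $$W(\Gamma)=\frac{1}{4} \Big[ v \cdot \ell(\Gamma) + \sum_{p, q \in V(\Gamma)} \mathrm{val}(q)\, r(p,q) \Big].$$ In particular, if each edge length is equal to $1$, $$W(\Gamma)=\frac{1}{4} \Big[ v(v-1)+ \sum_{p, q \in V(\Gamma)} \mathrm{val}(q)\, r(p,q) \Big].$$
   Context: A metrized graph is a finite connected graph each of whose edges is identified with a closed segment of positive length; its vertex set $V(\Gamma)$ is a finite nonempty set containing every point of valence $\neq 2$, and $v=\#V(\Gamma)$. $\mathrm{val}(q)$ is the valence of $q$ (number of directions emanating from $q$). $\ell(\Gamma)$ is the total length. $r(p,q)$ is the effective resistance between $p$ and $q$ (edges as resistors of resistance equal to length); on a tree it equals the path distance $d(p,q)$. The Wiener index is $W(\Gamma)=\frac12\sum_{p,q\in V(\Gamma)}d(p,q)$. *)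

(* A metrized tree is modelled combinatorially: a finite
   vertex type T (= V(Gamma)), an edge set E of 2-element subsets of T, and
   positive edge lengths len : {set T} -> R. *)
From Stdlib Require Import ClassicalEpsilon.
From mathcomp Require Import all_boot all_order all_algebra.
Set Implicit Arguments. Unset Strict Implicit. Unset Printing Implicit Defensive.
Import Order.TTheory GRing.Theory Num.Theory.
Local Open Scope ring_scope.

Section MetrizedGraph.
Variables (R : realFieldType) (T : finType) (E : {set {set T}}) (len : {set T} -> R).

Definition adj : rel T := fun p q => (p != q) && ([set p; q] \in E).

Definition valence (q : T) : nat := #|[set x | adj q x]|.

Definition total_length : R := \sum_(f in E) len f.

Definition walk (p q : T) (s : seq T) : bool := path adj p s && (last p s == q).

Definition walk_len (p : T) (s : seq T) : R :=
  \sum_(i < size s) len [set nth p (p :: s) i; nth p s i].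

(* path (shortest-walk) distance; walks with fewer than #|T| steps suffice,
   the default value total_length is only an upper bound never attained
   for connected graphs. *)
Definition dist (p q : T) : R :=
  \big[Num.min/total_length]_(k < #|T|)
     \big[Num.min/total_length]_(t : k.-tuple T | walk p q t) walk_len p t.

Definition connected_graph : Prop := forall p q : T, connect adj p q.

Definition acyclic : Prop :=
  forall (p : T) (s : seq T), uniq (p :: s) -> (2 <= size s)%N -> ~~ cycle adj (p :: s).

Definition is_tree : Prop := connected_graph /\ acyclic.

Definition wiener : R := (\sum_(p : T) \sum_(q : T) dist p q) / 2.

(* weighted Laplacian (conductance 1/len on each edge) applied to a potential *)
Definition laplacian (x : T -> R) (u : T) : R :=
  \sum_(w | adj u w) (x u - x w) / len [set u; w].

(* effective resistance: inject unit current at p, extract it at q; r(p,q)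
   is the potential difference x p - x q of any solution x of L x = 1_p - 1_q
   (solutions exist and are unique up to constants on a connected graph). *)
Definition resistance (p q : T) : R :=
  let x := epsilon (inhabits (fun _ : T => 0 : R))
     (fun x : T -> R => forall u : T,
        laplacian x u = (u == p)%:R - (u == q)%:R) in
  x p - x q.
End MetrizedGraph.

From Pilot Require Import Defs.
From Stdlib Require Import ClassicalEpsilon.
From mathcomp Require Import all_boot all_order all_algebra ring lra.
Set Implicit Arguments. Unset Strict Implicit. Unset Printing Implicit Defensive.
Import Order.TTheory GRing.Theory Num.Theory.
Local Open Scope ring_scope.

(* Along every edge of a tree the distance d(., q) to a fixed vertex q changes
   by exactly the edge length, so the Laplacian of d(., q) at u is
   2 [u <> q] - val u.  Hence (d(., q) - d(., p)) / 2 solves the equations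
   defining r(p, q), and r = d since harmonic functions are constant on a
   connected graph.  Green's identity for d(., q) gives
   sum_u val u d(u, q) = 2 sum_u d(u, q) - l(Gamma); summing over q yields the
   formula.  For unit lengths, l(Gamma) = #E = v - 1 follows from
   sum_u (L d(., q)) u = 0. *)

Section BigMin.
Variable R : realDomainType.

Lemma bigmin_le (I : eqType) (r : seq I) (P : pred I) (F : I -> R) x i :
  i \in r -> P i -> \big[Num.min/x]_(j <- r | P j) F j <= F i.
Proof.
elim: r => [//|j r IH]; rewrite inE big_cons => /orP[/eqP <-|i_r] Pi.
  by rewrite Pi ge_min lexx.
by case: (P j); rewrite ?ge_min IH ?orbT.
Qed.

Lemma le_bigmin (I : Type) (r : seq I) (P : pred I) (F : I -> R) x y :
  y <= x -> (forall i, P i -> y <= F i) -> y <= \big[Num.min/x]_(i <- r | P i) F i.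
Proof.
by move=> y_x y_F; elim/big_rec: _ => // i z Pi y_z; rewrite le_min y_F.
Qed.

End BigMin.

Section Graph.
Variables (R : realFieldType) (T : finType) (E : {set {set T}}) (len : {set T} -> R).

Notation adj := (adj E).
Notation L := (laplacian E len).

Lemma adjC : symmetric adj.
Proof. by move=> x y; rewrite /Defs.adj eq_sym setUC. Qed.

Lemma adj_irr x : adj x x = false.
Proof. by rewrite /Defs.adj eqxx. Qed.

Lemma valenceE u : (valence E u)%:R = \sum_(w | adj u w) (1 : R).
Proof. by rewrite /valence -sum1_card natr_sum; apply: eq_bigl => w; rewrite inE. Qed.

Lemma sum_adj_swap (g : T -> T -> R) :
  \sum_u \sum_(w | adj u w) g u w = \sum_u \sum_(w | adj u w) g w u.
Proof.
rewrite (exchange_big_dep xpredT) //=; apply: eq_bigr => u _.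
by apply: eq_bigl => w; rewrite adjC.
Qed.

Lemma laplacianB x y u : L (fun v => x v - y v) u = L x u - L y u.
Proof. by rewrite /laplacian -sumrB; apply: eq_bigr => w _; ring. Qed.

Lemma laplacianZ c x u : L (fun v => c * x v) u = c * L x u.
Proof. by rewrite /laplacian mulr_sumr; apply: eq_bigr => w _; ring. Qed.

Lemma sum_laplacian x : \sum_u L x u = 0.
Proof.
have swap : \sum_u L x u = - \sum_u L x u.
  rewrite [LHS]sum_adj_swap -sumrN; apply: eq_bigr => u _.
  by rewrite -sumrN; apply: eq_bigr => w _; rewrite setUC -mulNr opprB.
have : (\sum_u L x u) *+ 2 = 0 by rewrite mulr2n {1}swap addNr.
by move/eqP; rewrite mulrn_eq0 /= => /eqP.
Qed.

Lemma energy x : (\sum_u x u * L x u) *+ 2 =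
  \sum_u \sum_(w | adj u w) (x u - x w) ^+ 2 / len [set u; w].
Proof.
have expand : \sum_u x u * L x u =
    \sum_u \sum_(w | adj u w) x u * (x u - x w) / len [set u; w].
  by apply: eq_bigr => u _; rewrite mulr_sumr; apply: eq_bigr => w _; rewrite mulrA.
rewrite mulr2n expand {1}sum_adj_swap -big_split /=; apply: eq_bigr => u _.
rewrite -big_split /=; apply: eq_bigr => w _.
by rewrite setUC; ring.
Qed.

Lemma walk_len_nil p : walk_len len p [::] = 0.
Proof. by rewrite /walk_len big_ord0. Qed.

Lemma walk_len_cons p x s :
  walk_len len p (x :: s) = len [set p; x] + walk_len len x s.
Proof.
rewrite /walk_len big_ord_recl /=; congr (_ + _); apply: eq_bigr => i _.
have i_s : (i < size s)%N := ltn_ord i.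
rewrite [nth p s i](set_nth_default x) //.
by rewrite [nth p (x :: s) i](set_nth_default x) //= ltnW.
Qed.

Lemma walk_len_rcons p s y :
  walk_len len p (rcons s y) = walk_len len p s + len [set last p s; y].
Proof.
elim: s p => [|x s IH] p /=; first by rewrite walk_len_cons !walk_len_nil addr0 add0r.
by rewrite !walk_len_cons IH addrA.
Qed.

Lemma walk_len_rev p s :
  walk_len len (last p s) (rev (belast p s)) = walk_len len p s.
Proof.
elim: s p => [|y s IH] p /=; first by rewrite !walk_len_nil.
rewrite rev_cons walk_len_rcons IH walk_len_cons addrC setUC.
by case: s {IH} => [|z s] //=; rewrite rev_cons last_rcons.
Qed.

Fixpoint walk_edges (p : T) (s : seq T) : seq {set T} :=
  if s is x :: s' then [set p; x] :: walk_edges x s' else [::].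

Lemma walk_lenE p s : walk_len len p s = \sum_(e <- walk_edges p s) len e.
Proof.
elim: s p => [|x s IH] p; first by rewrite walk_len_nil big_nil.
by rewrite walk_len_cons big_cons IH.
Qed.

Lemma mem_walk_edges p s e y : e \in walk_edges p s -> y \in e -> y \in p :: s.
Proof.
elim: s p => [|x s IH] p //=; rewrite inE => /orP[/eqP -> | /IH y_s].
  by rewrite !inE => /orP[->|->]; rewrite ?orbT.
by move=> /y_s x_s; rewrite inE x_s orbT.
Qed.

Lemma uniq_walk_edges p s : uniq (p :: s) -> uniq (walk_edges p s).
Proof.
elim: s p => [|x s IH] p //= /andP[p_xs /andP[x_s u_s]].
rewrite IH /= ?x_s ?u_s // andbT; apply/negP => /(@mem_walk_edges x s _ p).
by rewrite !inE eqxx => /(_ isT) p_in; move: p_xs; rewrite inE p_in.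
Qed.

Lemma walk_edges_sub p s : path adj p s -> {subset walk_edges p s <= E}.
Proof.
elim: s p => [|x s IH] p //= /andP[/andP[_ pxE] p_s] e; rewrite inE.
by case/orP=> [/eqP ->|/IH]; [|apply].
Qed.

Hypothesis hE2 : forall f, f \in E -> #|f| = 2.

Lemma sum_adj_edges (F : {set T} -> R) :
  \sum_u \sum_(w | adj u w) F [set u; w] = (\sum_(e in E) F e) *+ 2.
Proof.
rewrite pair_big_dep /= (partition_big (fun uw : T * T => [set uw.1; uw.2]) (mem E)) /=;
  last by move=> i /andP[].
rewrite -sumrMnl; apply: eq_bigr => e eE.
rewrite (eq_bigr (fun _ => F e)); last by move=> uw /andP[_ /eqP ->].
rewrite sumr_const; congr (_ *+ _).
have /cards2P[a [b [ab e_ab]]] : #|e| == 2%N by rewrite hE2.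
subst e.
have ab_ba : (a, b) != (b, a) by rewrite xpair_eqE negb_and ab.
transitivity #|[set (a, b); (b, a)]|; last by rewrite cards2 ab_ba.
apply: eq_card => -[u w]; rewrite !inE /=; apply/idP/idP.
  case/andP=> huw /eqP huw_ab.
  have hu : u \in [set a; b] by rewrite -huw_ab set21.
  have hw : w \in [set a; b] by rewrite -huw_ab set22.
  move: hu hw huw; rewrite !inE => /orP[]/eqP-> /orP[]/eqP->;
    by rewrite ?adj_irr ?eqxx ?orbT.
have adj_ab : adj a b by rewrite /Defs.adj ab.
case/orP=> /eqP[-> ->]; rewrite unfold_in /=.
  by rewrite adj_ab eqxx.
by rewrite adjC adj_ab setUC eqxx.
Qed.

Hypothesis hlen : forall f, f \in E -> 0 < len f.

Lemma adj_len x y : adj x y -> 0 < len [set x; y].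
Proof. by case/andP=> _ /hlen. Qed.

Lemma adj_len_neq0 x y : adj x y -> len [set x; y] != 0.
Proof. by move/adj_len; rewrite lt0r => /andP[]. Qed.

Lemma walk_len_le_total p s :
  path adj p s -> uniq (p :: s) -> walk_len len p s <= total_length E len.
Proof.
move=> p_s u_s; rewrite walk_lenE big_uniq ?uniq_walk_edges //.
rewrite /total_length (bigID (mem (walk_edges p s)) (mem E)) /= -[X in X <= _]addr0.
apply: lerD; last by apply: sumr_ge0 => e /andP[/hlen /ltW].
rewrite [leRHS](eq_bigl (mem (walk_edges p s))) // => e /=.
by case e_s: (e \in walk_edges p s); rewrite ?andbF ?andbT ?(walk_edges_sub p_s e_s).
Qed.

Lemma harmonic_adj x : (forall u, L x u = 0) -> forall u w, adj u w -> x u = x w.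
Proof.
move=> Lx0 u w huw.
have term_ge0 a b : adj a b -> 0 <= (x a - x b) ^+ 2 / len [set a; b].
  by move=> hab; rewrite divr_ge0 ?sqr_ge0 // ltW // adj_len.
have energy0 : \sum_a \sum_(b | adj a b) (x a - x b) ^+ 2 / len [set a; b] = 0.
  by rewrite -energy big1 ?mul0rn // => a _; rewrite Lx0 mulr0.
have row_ge0 a : true -> 0 <= \sum_(b | adj a b) (x a - x b) ^+ 2 / len [set a; b].
  by move=> _; apply: sumr_ge0 => b /term_ge0.
have row_u0 := psumr_eq0P row_ge0 energy0 (i := u) isT.
have /eqP := psumr_eq0P (term_ge0 u) row_u0 huw.
rewrite mulf_eq0 invr_eq0 (negbTE (adj_len_neq0 huw)) orbF sqrf_eq0 subr_eq0.
by move/eqP.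
Qed.

Lemma harmonic_connect x :
  (forall u, L x u = 0) -> forall p q, connect adj p q -> x p = x q.
Proof.
move=> Lx0 p q /connectP[s + ->]; elim: s p => [//|a s IH] p /= /andP[hpa ps].
by rewrite (harmonic_adj Lx0 hpa) IH.
Qed.

Lemma resistance_potential (x : T -> R) p q :
  connected_graph E -> (forall u, L x u = (u == p)%:R - (u == q)%:R) ->
  resistance E len p q = x p - x q.
Proof.
move=> hconn hx.
have solvable : exists x : T -> R, forall u, L x u = (u == p)%:R - (u == q)%:R.
  by exists x.
have := epsilon_spec (inhabits (fun _ : T => 0 : R)) _ solvable.
rewrite /resistance; set y := epsilon _ _ => hy.
(* The chosen solution y differs from x by a harmonic, hence constant, function. *)
have Lyx0 u : L (fun v => y v - x v) u = 0 by rewrite laplacianB hy hx subrr.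
have := harmonic_connect Lyx0 (hconn p q); lra.
Qed.

End Graph.

Section Tree.
Variables (R : realFieldType) (T : finType) (E : {set {set T}}) (len : {set T} -> R).
Hypothesis htree : is_tree E.

Notation adj := (adj E).
Notation L := (laplacian E len).

(* Otherwise x :: t1 ++ [:: y] would close a cycle. *)
Lemma path_to_neighbor x t1 y t2 : path adj x (t1 ++ y :: t2) ->
  uniq (x :: t1 ++ y :: t2) -> adj x y -> t1 = [::].
Proof.
case: t1 => [//|z t1] p_xt u_xt adj_xy; exfalso.
have u_cyc : uniq (x :: rcons (z :: t1) y).
  by move: u_xt; rewrite -cat_rcons -cat_cons cat_uniq => /andP[].
have := htree.2 _ _ u_cyc; rewrite size_rcons /= ltnS ltnS => /(_ isT); apply/negP/negPn.
move: p_xt; rewrite -cat_rcons cat_path => /andP[p_prefix _].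
change (path adj x (rcons (rcons (z :: t1) y) x)).
by rewrite rcons_path p_prefix last_rcons adjC adj_xy.
Qed.

Lemma tree_path_unique x s t : path adj x s -> path adj x t ->
  uniq (x :: s) -> uniq (x :: t) -> last x s = last x t -> s = t.
Proof.
elim: s x t => [|y s IH] x t.
  case: t => [//|z t] _ _ _ /= /andP[x_t _] last_eq.
  by move: x_t; rewrite last_eq /= mem_last.
move=> /= /andP[adj_xy p_s] p_t /andP[x_s u_s] u_t last_eq.
have [y_t|y_t] := boolP (y \in t).
  case/splitPr: y_t p_t u_t last_eq => t1 t2 p_t u_t.
  have t1_nil := path_to_neighbor p_t u_t adj_xy; subst t1.
  move: p_t u_t => /= /andP[_ p_t2] /andP[_ u_t2] last_eq.
  by rewrite (IH y t2).
have s_xt : s = x :: t.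
  apply: (IH y) => //=; first by rewrite adjC adj_xy.
  rewrite u_t inE negb_or y_t !andbT.
  by move: x_s; rewrite inE negb_or eq_sym => /andP[].
by move: x_s; rewrite s_xt !inE eqxx !orbT.
Qed.

Definition is_tpath p q s := [&& path adj p s, last p s == q & uniq (p :: s)].

Lemma tpath_exists p q : exists s, is_tpath p q s.
Proof.
have /connectP[s p_s ->] := htree.1 p q.
have [s' p_s' u_s' _] := shortenP p_s.
by exists s'; rewrite /is_tpath p_s' u_s' eqxx.
Qed.

Definition tpath p q := xchoose (tpath_exists p q).

Lemma tpathP p q : is_tpath p q (tpath p q).
Proof. exact: xchooseP. Qed.

Lemma path_tpath p q : path adj p (tpath p q).
Proof. by case/and3P: (tpathP p q). Qed.

Lemma last_tpath p q : last p (tpath p q) = q.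
Proof. by case/and3P: (tpathP p q) => _ /eqP. Qed.

Lemma uniq_tpath p q : uniq (p :: tpath p q).
Proof. by case/and3P: (tpathP p q). Qed.

Lemma tpath_eq p q s : is_tpath p q s -> tpath p q = s.
Proof.
case/and3P=> p_s /eqP last_s u_s.
apply: (tree_path_unique (x := p)) => //; first exact: path_tpath.
  exact: uniq_tpath.
by rewrite last_tpath last_s.
Qed.

Lemma tpathxx p : tpath p p = [::].
Proof. by apply: tpath_eq; rewrite /is_tpath /= eqxx. Qed.

Lemma tpath_cons p q x s : tpath p q = x :: s -> tpath x q = s.
Proof.
move=> tpq; apply: tpath_eq; have := tpathP p q; rewrite tpq /is_tpath /=.
by case/and3P=> /andP[_ ->] -> /andP[_ ->].
Qed.

Lemma tpath_rev p q : tpath q p = rev (belast p (tpath p q)).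
Proof.
apply: tpath_eq; have := last_tpath p q; have := path_tpath p q.
have := uniq_tpath p q; set s := tpath p q => u_s p_s <-.
apply/and3P; split.
- by rewrite rev_path (eq_path (e' := adj)) // => a b; rewrite /= adjC.
- by case: s {u_s p_s} => [|x s] //=; rewrite rev_cons last_rcons.
- by rewrite -rev_rcons -lastI rev_uniq.
Qed.

Lemma tpath_edge a b q : adj a b ->
  tpath a q = b :: tpath b q \/ tpath b q = a :: tpath a q.
Proof.
move=> adj_ab; have [a_bq|a_bq] := boolP (a \in tpath b q).
  right; have := path_tpath b q; have := uniq_tpath b q; have := last_tpath b q.
  case/splitPr: a_bq => t1 t2 last_t u_t p_t.
  have t1_nil : t1 = [::] by apply: path_to_neighbor p_t u_t _; rewrite adjC.
  subst t1; move: p_t u_t last_t => /= /andP[_ p_t2] /andP[_ u_t2] last_t2.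
  congr (_ :: _); symmetry; apply: tpath_eq.
  by rewrite /is_tpath p_t2 last_t2 eqxx /= u_t2.
left; apply: tpath_eq; rewrite /is_tpath /= adj_ab path_tpath last_tpath eqxx /=.
have := uniq_tpath b q; rewrite /= => /andP[-> ->].
by rewrite inE negb_or a_bq !andbT; case/andP: adj_ab.
Qed.

Hypothesis hlen : forall f, f \in E -> 0 < len f.

Definition tdist p q := walk_len len p (tpath p q).

Lemma tdistxx p : tdist p p = 0.
Proof. by rewrite /tdist tpathxx walk_len_nil. Qed.

Lemma tdistC p q : tdist q p = tdist p q.
Proof. by rewrite /tdist tpath_rev -{1}(last_tpath p q) walk_len_rev. Qed.

Lemma tdist_edge a b q : adj a b ->
  tdist a q = len [set a; b] + tdist b q \/ tdist b q = len [set a; b] + tdist a q.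
Proof.
move=> adj_ab; rewrite /tdist.
case: (tpath_edge q adj_ab) => ->; rewrite walk_len_cons; first by left.
by rewrite setUC; right.
Qed.

Lemma tdist_le_walk p s : path adj p s -> tdist p (last p s) <= walk_len len p s.
Proof.
elim: s p => [|x s IH] p /=; first by rewrite tdistxx walk_len_nil.
case/andP=> adj_px p_s; rewrite walk_len_cons.
apply: (@le_trans _ _ (len [set p; x] + tdist x (last x s))); last by rewrite lerD2l IH.
case: (tdist_edge (last x s) adj_px) => -> //.
by rewrite addrA lerDr addr_ge0 ?ltW ?(adj_len hlen adj_px).
Qed.

Lemma dist_tdist p q : dist E len p q = tdist p q.
Proof.
apply/eqP; rewrite eq_le; apply/andP; split.
  have size_lt : (size (tpath p q) < #|T|)%N.
    rewrite -[(_ < _)%N]/(size (p :: tpath p q) <= #|T|)%N.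
    by rewrite -(card_uniqP (uniq_tpath p q)) max_card.
  apply: le_trans (bigmin_le _ _ (mem_index_enum (Ordinal size_lt)) isT) _.
  have w_pq : walk E p q (in_tuple (tpath p q)).
    by rewrite /walk /= path_tpath last_tpath eqxx.
  exact: (bigmin_le _ _ (mem_index_enum (in_tuple (tpath p q))) w_pq).
have tdist_le_total : tdist p q <= total_length E len.
  exact: walk_len_le_total (path_tpath p q) (uniq_tpath p q).
apply: le_bigmin => // k _; apply: le_bigmin => // t /andP[p_t /eqP <-].
exact: tdist_le_walk.
Qed.

Lemma laplacian_tdist q u :
  L (fun v => tdist v q) u = 2 * (u != q)%:R - (valence E u)%:R.
Proof.
have edge_term w : adj u w -> (tdist u q - tdist w q) / len [set u; w] =
    2 * (tpath u q == w :: tpath w q)%:R - 1.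
  move=> adj_uw; have len_neq0 := adj_len_neq0 hlen adj_uw.
  case: (tpath_edge q adj_uw) => tpath_uw.
    by rewrite /tdist tpath_uw walk_len_cons eqxx addrK divff //=; lra.
  have -> : (tpath u q == w :: tpath w q) = false.
    rewrite tpath_uw; apply/eqP => /(congr1 size) /= /eqP.
    by rewrite -addn2 -{1}[size _]addn0 eqn_add2l.
  rewrite /tdist tpath_uw walk_len_cons setUC opprD addrCA subrr addr0 mulNr divff //=.
  lra.
rewrite /laplacian (eq_bigr _ edge_term) sumrB -mulr_sumr valenceE; congr (2 * _ - _).
have [<-|u_q] := eqP.
  by rewrite big1 // => w _; rewrite tpathxx.
have : tpath u q != [::].
  by apply/eqP => tpath_nil; apply: u_q; rewrite -(last_tpath u q) tpath_nil.
case tpath_u: (tpath u q) => [//|h s] _.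
have adj_uh : adj u h by have := path_tpath u q; rewrite tpath_u => /andP[].
rewrite (bigD1 h) //= (tpath_cons tpath_u) eqxx big1 ?addr0 // => w /andP[_ w_h].
by case: eqP => // -[] /eqP; rewrite eq_sym (negbTE w_h).
Qed.

Lemma resistance_tdist p q : resistance E len p q = tdist p q.
Proof.
pose x u := 2^-1 * (tdist u q - tdist u p).
have Lx u : L x u = (u == p)%:R - (u == q)%:R.
  rewrite laplacianZ laplacianB !laplacian_tdist.
  by case: (u == p); case: (u == q) => /=; field.
by rewrite (resistance_potential hlen htree.1 Lx) /x !tdistxx (tdistC q p); field.
Qed.

Hypothesis hE2 : forall f, f \in E -> #|f| = 2.

Lemma energy_tdist q : \sum_u tdist u q * L (fun v => tdist v q) u = total_length E len.
Proof.
suff: (\sum_u tdist u q * L (fun v => tdist v q) u) *+ 2 = total_length E len *+ 2.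
  by move/eqP; rewrite eqrMn2r => /eqP.
rewrite energy /total_length -sum_adj_edges //.
apply: eq_bigr => u _; apply: eq_bigr => w adj_uw.
have len_neq0 := adj_len_neq0 hlen adj_uw.
case: (tdist_edge q adj_uw) => ->; first by rewrite addrK expr2 mulfK.
by rewrite opprD addrCA subrr addr0 sqrrN expr2 mulfK.
Qed.

Lemma sum_valence_tdist q :
  \sum_u (valence E u)%:R * tdist u q = 2 * \sum_u tdist u q - total_length E len.
Proof.
rewrite -(energy_tdist q) mulr_sumr -sumrB; apply: eq_bigr => u _.
by rewrite laplacian_tdist; case: eqP => [->|_]; rewrite ?tdistxx /=; ring.
Qed.

Lemma sum_valence : \sum_u ((valence E u)%:R : R) = (\sum_(e in E) 1) *+ 2.
Proof. by rewrite -sum_adj_edges //; apply: eq_bigr => u _; apply: valenceE. Qed.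

Lemma card_edges_tree : (0 < #|T|)%N -> \sum_(e in E) (1 : R) = #|T|%:R - 1.
Proof.
move=> T_gt0; have [q _] := card_gt0P T_gt0.
have := sum_laplacian E len (fun v => tdist v q).
rewrite (eq_bigr _ (fun u _ => laplacian_tdist q u)) sumrB -mulr_sumr sum_valence.
have -> : \sum_u ((u != q)%:R : R) = #|T|%:R - 1.
  rewrite (bigD1 q) //= eqxx add0r (eq_bigr (fun _ => 1)) => [|u /negbTE -> //].
  by rewrite sumr_const cardC1 -{2}(prednK T_gt0) -natr1 addrK.
by move=> /eqP; rewrite subr_eq0 mulr2n => /eqP; lra.
Qed.

Lemma wiener_tree : wiener E len = (#|T|%:R * total_length E len +
   \sum_p \sum_q (valence E q)%:R * resistance E len p q) / 4.
Proof.
have wienerE : wiener E len = (\sum_p \sum_q tdist p q) / 2.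
  by rewrite /wiener; congr (_ / _); apply: eq_bigr => p _; apply: eq_bigr => q _;
    apply: dist_tdist.
have weighted : \sum_p \sum_q (valence E q)%:R * resistance E len p q =
    2 * \sum_p \sum_q tdist p q - #|T|%:R * total_length E len.
  rewrite (eq_bigr (fun p => 2 * \sum_q tdist q p - total_length E len)); last first.
    move=> p _; rewrite -sum_valence_tdist; apply: eq_bigr => q _.
    by rewrite resistance_tdist tdistC.
  by rewrite sumrB -mulr_sumr sumr_const exchange_big [X in _ = _ - X]mulrC mulr_natr.
by rewrite wienerE weighted; field.
Qed.
End Tree.

Theorem theorem4p2 (R : realFieldType) (T : finType) (E : {set {set T}})
    (len : {set T} -> R)
    (hV : (0 < #|T|)%N)
    (hE2 : forall f, f \in E -> #|f| = 2)
    (hlen : forall f, f \in E -> 0 < len f)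
    (htree : is_tree E) :
  wiener E len =
    (#|T|%:R * total_length E len
     + \sum_(p : T) \sum_(q : T) (valence E q)%:R * resistance E len p q) / 4
  /\
  ((forall f, f \in E -> len f = 1) ->
   wiener E len =
    (#|T|%:R * (#|T|%:R - 1)
     + \sum_(p : T) \sum_(q : T) (valence E q)%:R * resistance E len p q) / 4).
Proof.
have formula := wiener_tree htree hlen hE2.
split=> // unit_len; rewrite formula -(card_edges_tree htree hlen hE2 hV).
by congr ((_ * _ + _) / _); apply: eq_bigr => e /unit_len.
Qed.
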